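(* Let $G$ be an uncountable group of regular cardinality $\gamma$. Then the ballean $\mathcal{B}(G)$ is decomposable in a direct product, i.e. it is asymorphic to $\mathcal{B}(Z)$ for some direct product $Z=\otimes_{\lambda<\delta}(Z_\lambda,e_\lambda)$ of a pointed family of non-empty sets.
   Context: For an infinite group $G$ with identity $e$, $\mathcal{B}(G)=(G,\mathcal{F},B)$ where $\mathcal{F}=\{A\subseteq G: e\in A, |A|<|G|\}$ and $B(g,A)=gA$. For balleans $(X_1,P_1,B_1)$, $(X_2,P_2,B_2)$ (sets with families of balls $B(x,\alpha)\subseteq X$ indexed by $x\in X,\alpha\in P$), a map $f:X_1\to X_2$ is a $\prec$-mapping if for every $\alpha\in P_1$ there is $\beta\in P_2$ with $f(B_1(x,\alpha))\subseteq B_2(f(x),\beta)$ for all $x$; a bijection $f$ is an asymorphism if $f$ and $f^{-1}$ are $\prec$-mappings. Given an ordinal $\delta$ and non-empty sets $Z_\lambda$ ($\lambda<\delta$) with chosen points $e_\lambda\in Z_\lambda$, the direct product $Z=\otimes_{\lambda<\delta}(Z_\lambda,e_\lambda)$ is the set of functions $f$ on $\{\lambda:\lambda<\delta\}$ with $f(\lambda)\in Z_\lambda$ and $f(\lambda)=e_\lambda$ for all but finitely many $\lambda$; its ballean is $\mathcal{B}(Z)=(Z,\{\lambda:\lambda<\delta\},B)$ with $B(f,\lambda)=\{g\in Z: g(\lambda')=f(\lambda')\text{ for all }\lambda\le\lambda'<\delta\}$. *)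

From Stdlib Require Import List.
Set Implicit Arguments.

Definition is_group (G : Type) (mul : G -> G -> G) (e : G) (inv : G -> G) : Prop :=
  (forall x y z, mul x (mul y z) = mul (mul x y) z) /\
  (forall x, mul e x = x) /\ (forall x, mul x e = x) /\
  (forall x, mul (inv x) x = e) /\ (forall x, mul x (inv x) = e).

Definition injective {A B : Type} (f : A -> B) : Prop :=
  forall x y, f x = f y -> x = y.

Definition smaller_than_carrier (G : Type) (A : G -> Prop) : Prop :=
  ~ exists f : G -> G, injective f /\ forall x, A (f x).

Definition type_smaller (I G : Type) : Prop :=
  ~ exists f : G -> I, injective f.

Definition uncountable (G : Type) : Prop := ~ exists f : G -> nat, injective f.

Definition regular_card (G : Type) : Prop :=
  forall (I : Type) (A : I -> G -> Prop),
    type_smaller I G -> (forall i, smaller_than_carrier (A i)) ->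
    exists x, forall i, ~ A i x.

(* A ballean (X, P, B) is given by B : X -> P -> (X -> Prop);
   B x a y means y ∈ B(x, a). *)
Definition prec_map {X1 P1 X2 P2 : Type}
  (B1 : X1 -> P1 -> X1 -> Prop) (B2 : X2 -> P2 -> X2 -> Prop) (f : X1 -> X2) : Prop :=
  forall a : P1, exists b : P2, forall x y, B1 x a y -> B2 (f x) b (f y).

Definition asymorphic {X1 P1 X2 P2 : Type}
  (B1 : X1 -> P1 -> X1 -> Prop) (B2 : X2 -> P2 -> X2 -> Prop) : Prop :=
  exists (f : X1 -> X2) (g : X2 -> X1),
    (forall x, g (f x) = x) /\ (forall y, f (g y) = y) /\
    prec_map B1 B2 f /\ prec_map B2 B1 g.

Definition group_radius (G : Type) (e : G) : Type :=
  { A : G -> Prop | A e /\ smaller_than_carrier A }.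

Definition group_ball (G : Type) (mul : G -> G -> G) (e : G)
  (g : G) (A : group_radius e) (y : G) : Prop :=
  exists a, proj1_sig A a /\ y = mul g a.

(* Strict well-order on an index type (a representative of an ordinal delta). *)
Definition strict_well_order (I : Type) (lt : I -> I -> Prop) : Prop :=
  (forall x, ~ lt x x) /\
  (forall x y z, lt x y -> lt y z -> lt x z) /\
  (forall x y, lt x y \/ x = y \/ lt y x) /\
  well_founded lt.

Definition dprod (I : Type) (Z : I -> Type) (ez : forall i, Z i) : Type :=
  { f : forall i, Z i | exists s : list I, forall i, f i <> ez i -> In i s }.

Definition dprod_ball (I : Type) (lt : I -> I -> Prop) (Z : I -> Type)
  (ez : forall i, Z i) (f : dprod Z ez) (l : I) (g : dprod Z ez) : Prop :=
  forall l', (lt l l' \/ l = l') -> proj1_sig g l' = proj1_sig f l'.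

(* Well-order G so that all proper initial segments are small, and let
   [Glt x], [Gle x] be the subgroups generated by the elements below x, resp.
   up to x. By uncountability and regularity each [Glt x] is small and every
   small subset of G lies in some [Glt x], so the balls gA are cofinal with the
   left cosets g [Glt x]. An element g <> e lies in [Gle (height g)] but not in
   [Glt (height g)]; writing g = r g' with r the chosen representative of
   g [Glt (height g)] and recursing on g' gives finitely many coordinates, the
   one at x being a representative of a coset of [Glt x] in [Gle x]. Two
   elements have equal coordinates from x on exactly when they lie in the same
   left coset of [Glt x], which identifies the balls of both balleans. *)

From Stdlib Require Import List Classical ClassicalEpsilon FunctionalExtensionality
  PropExtensionality ProofIrrelevance Wellfounded.
From mathcomp Require boolp wochoice.

Module WellOrderingPrinciple.
Import ssreflect ssrbool eqtype boolp wochoice.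

Lemma antisymmetric_minimizing_relation (T : Type) : exists R : T -> T -> Prop,
  (forall x y, R x y -> R y x -> x = y) /\
  (forall P : T -> Prop, (exists x, P x) -> exists z, P z /\ forall y, P y -> R z y).
Proof.
have [R woR] := well_ordering_principle {classic T}.
have minP (P : T -> Prop) : (exists x, P x) -> exists z, P z /\ forall y, P y -> R z y.
  case=> x Px; have [|z [[/asboolP Pz lbz] _]] := woR (fun u => `[< P u >]).
    by exists x; apply/asboolP.
  by exists z; split=> // y Py; apply: lbz; apply/asboolP.
exists (fun x y => R x y); split=> // x y Rxy Ryx.
have Rrefl u : R u u.
  by have [|z [-> minz]] := minP (fun v => v = u); [exists u | exact: minz].
have [|z [_ minz]] := woR (fun u => `[< u = x \/ u = y >]); first by exists x; apply/asboolP; left.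
have minx : minimum_of R (fun u => `[< u = x \/ u = y >]) x.
  by split; [apply/asboolP; left | move=> u /asboolP[] ->].
have miny : minimum_of R (fun u => `[< u = x \/ u = y >]) y.
  by split; [apply/asboolP; right | move=> u /asboolP[] ->].
by rewrite -(minz _ minx) -(minz _ miny).
Qed.

End WellOrderingPrinciple.

Lemma strict_well_order_exists (T : Type) : exists lt : T -> T -> Prop, strict_well_order lt.
Proof.
  destruct (WellOrderingPrinciple.antisymmetric_minimizing_relation T) as [R [Ranti Rmin]].
  assert (Rrefl : forall x, R x x).
  { intro x. destruct (Rmin (fun u => u = x)) as [z [-> Hz]]; eauto. }
  exists (fun x y => x <> y /\ R x y). split; [|split; [|split]].
  - intros x [H _]; auto.
  - intros x y z [nxy Rxy] [nyz Ryz].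
    destruct (Rmin (fun u => u = x \/ u = y \/ u = z)) as [m [[-> | [-> | ->]] Hm]]; eauto.
    + split; [intros <-; apply nxy, Ranti|]; auto.
    + exfalso; apply nxy, Ranti; auto.
    + exfalso; apply nyz, Ranti; auto.
  - intros x y. destruct (classic (x = y)) as [|nxy]; auto.
    destruct (Rmin (fun u => u = x \/ u = y)) as [m [[-> | ->] Hm]];
      [eauto | left; split | right; right; split]; auto.
  - intros a. apply NNPP; intro Ha.
    destruct (Rmin (fun u => ~ Acc (fun x y => x <> y /\ R x y) u)) as [z [Hz Hm]]; eauto.
    apply Hz; constructor. intros y [nyz Ryz]. apply NNPP; intro Hy.
    apply nyz, Ranti; auto.
Qed.

Lemma strict_well_order_comap (T U : Type) (lt : U -> U -> Prop) (h : T -> U) :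
  strict_well_order lt -> injective h -> strict_well_order (fun a b => lt (h a) (h b)).
Proof.
  intros [irr [trans [tri wf]]] hinj. split; [|split; [|split]].
  - intros x; apply irr.
  - intros x y z; apply trans.
  - intros x y. destruct (tri (h x) (h y)) as [|[E|]]; auto.
  - apply wf_inverse_image, wf.
Qed.

Section WellOrder.
Context {T : Type} {lt : T -> T -> Prop} (lt_wo : strict_well_order lt).

Definition le (x y : T) : Prop := lt x y \/ x = y.

Lemma lt_irrefl x : ~ lt x x. Proof. apply lt_wo. Qed.
Lemma lt_trans {x y z} : lt x y -> lt y z -> lt x z. Proof. apply lt_wo. Qed.
Lemma lt_trichotomy x y : lt x y \/ x = y \/ lt y x. Proof. apply lt_wo. Qed.
Lemma lt_wf : well_founded lt. Proof. apply lt_wo. Qed.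

Lemma le_refl x : le x x. Proof. right; auto. Qed.
Lemma le_lt_trans {x y z} : le x y -> lt y z -> lt x z.
Proof. intros [H|<-] H'; eauto using lt_trans. Qed.
Lemma lt_le_trans {x y z} : lt x y -> le y z -> lt x z.
Proof. intros H [H'|<-]; eauto using lt_trans. Qed.
Lemma le_trans {x y z} : le x y -> le y z -> le x z.
Proof. intros [H|<-] H'; auto. left; eapply lt_le_trans; eauto. Qed.
Lemma lt_not_le {x y} : lt x y -> ~ le y x.
Proof. intros H H'. apply (lt_irrefl x). eapply lt_le_trans; eauto. Qed.
Lemma not_lt_le {x y} : ~ lt x y -> le y x.
Proof. intros H. destruct (lt_trichotomy x y) as [|[->|]]; [contradiction|apply le_refl|left; auto]. Qed.
Lemma le_antisym {x y} : le x y -> le y x -> x = y.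
Proof. intros [H|E] H'; auto. exfalso; apply (lt_not_le H H'). Qed.
Lemma le_total x y : le x y \/ le y x.
Proof. destruct (lt_trichotomy x y) as [|[->|]]; [left; left|left; right|right; left]; auto. Qed.

Lemma exists_min {P : T -> Prop} : (exists x, P x) -> exists m, P m /\ forall y, P y -> le m y.
Proof.
  intros [x Px]. induction (lt_wf x) as [x _ IH].
  destruct (classic (exists y, P y /\ lt y x)) as [[y [Py Hy]]|Hno]; eauto.
  exists x; split; auto. intros y Py. apply not_lt_le. intros Hy. eauto.
Qed.

Lemma list_has_max (s : list T) : s <> nil -> exists m, In m s /\ forall x, In x s -> le x m.
Proof.
  induction s as [|a s IH]; intros Hs; [congruence|].
  destruct s as [|b s].
  - exists a. split; [left; auto|]. intros x [<-|[]]. apply le_refl.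
  - destruct IH as [m [Hm Hmax]]; [discriminate|].
    destruct (le_total a m) as [Ham|Hma].
    + exists m. split; [right; auto|]. intros x [<-|Hx]; auto.
    + exists a. split; [left; auto|]. intros x [<-|Hx]; [apply le_refl|eauto using le_trans].
Qed.

Lemma exists_max_of_finite {P : T -> Prop} (s : list T) :
  (forall x, P x -> In x s) -> (exists x, P x) -> exists m, P m /\ forall x, P x -> le x m.
Proof.
  intros Hs [x Px].
  set (t := filter (fun x => if excluded_middle_informative (P x) then true else false) s).
  assert (Ht : forall x, In x t <-> P x).
  { intro y. unfold t. rewrite filter_In.
    destruct (excluded_middle_informative (P y)); intuition (try discriminate; auto). }
  destruct (list_has_max t) as [m [Hm Hmax]].
  - intros E. apply (proj2 (Ht x)) in Px. rewrite E in Px. destruct Px.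
  - exists m. split; [apply Ht; auto|]. intros y Py; apply Hmax, Ht, Py.
Qed.

End WellOrder.

Lemma proj1_sig_inj (A : Type) (P : A -> Prop) (a b : {x : A | P x}) :
  proj1_sig a = proj1_sig b -> a = b.
Proof. apply eq_sig_hprop. intros; apply proof_irrelevance. Qed.

Lemma injective_surjective_inverse {A B : Type} {f : A -> B} :
  injective f -> (forall y, exists x, f x = y) ->
  exists g, (forall x, g (f x) = x) /\ (forall y, f (g y) = y).
Proof.
  intros finj fsurj. destruct (choice (fun y x => f x = y) fsurj) as [g Hg].
  exists g. split; auto.
Qed.

Section Smallness.
Context {G : Type}.
Local Notation small := (@smaller_than_carrier G).

Lemma small_subset (A B : G -> Prop) : (forall x, A x -> B x) -> small B -> small A.
Proof. intros AB HB [f [finj fA]]; apply HB; exists f; split; auto. Qed.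

Lemma not_small_full : ~ small (fun _ => True).
Proof. intros H; apply H; exists (fun x => x); split; auto. intros a b E; auto. Qed.

Lemma small_image (A : G -> Prop) (h : G -> G) :
  small A -> small (fun y => exists x, A x /\ y = h x).
Proof.
  intros HA [f [finj fA]]. apply HA.
  destruct (choice (fun z x => A x /\ f z = h x)) as [c Hc].
  { intros z. destruct (fA z) as [x [Ax E]]; eauto. }
  exists c; split.
  - intros a b E. apply finj. rewrite (proj2 (Hc a)), (proj2 (Hc b)), E; auto.
  - intros z; apply Hc.
Qed.

Lemma type_smaller_sig (A : G -> Prop) : small A -> type_smaller {x | A x} G.
Proof.
  intros HA [F Finj]; apply HA; exists (fun y => proj1_sig (F y)); split.
  - intros a b E; apply Finj, proj1_sig_inj, E.
  - intros x; apply proj2_sig.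
Qed.

(* If some initial segment of a well-order is large, G injects into the least
   such segment; pulling the order back along that injection leaves only small
   initial segments. *)
Lemma well_order_with_small_segments :
  exists lt : G -> G -> Prop, strict_well_order lt /\ forall x, small (fun y => lt y x).
Proof.
  destruct (strict_well_order_exists G) as [lt0 wo0].
  destruct (classic (exists x, ~ small (fun y => lt0 y x))) as [Hlarge|Hsmall].
  - destruct (exists_min wo0 Hlarge) as [x0 [Hx0 Hmin]].
    apply NNPP in Hx0. destruct Hx0 as [h [hinj hx0]].
    exists (fun a b => lt0 (h a) (h b)). split.
    + apply strict_well_order_comap; auto.
    + intros x [f [finj fx]].
      apply (lt_not_le wo0 (hx0 x)). apply Hmin.
      intros Hs. apply Hs. exists (fun z => h (f z)). split; auto.
      intros a b E; apply finj, hinj, E.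
  - exists lt0; split; auto. intros x. apply NNPP; intro H; apply Hsmall; eauto.
Qed.

Hypothesis G_uncountable : uncountable G.
Hypothesis G_regular : regular_card G.

Lemma small_singleton a : small (fun x => x = a).
Proof.
  intros [f [finj fa]]; apply G_uncountable; exists (fun _ => 0); intros x y _; apply finj.
  rewrite (fa x), (fa y); reflexivity.
Qed.

Lemma small_union (I : Type) (B : I -> G -> Prop) :
  type_smaller I G -> (forall i, small (B i)) -> small (fun x => exists i, B i x).
Proof.
  intros HI HB [f [finj fB]].
  destruct (G_regular _ (fun i x => B i (f x)) HI) as [x Hx].
  - intros i [h [hinj hB]]. apply (HB i). exists (fun y => f (h y)); split; auto.
    intros a b E; apply hinj, finj, E.
  - destruct (fB x) as [i Hi]; exact (Hx i Hi).
Qed.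

Lemma small_union2 (A B : G -> Prop) : small A -> small B -> small (fun x => A x \/ B x).
Proof.
  intros HA HB. apply small_subset with (fun x => exists b : bool, (if b then A else B) x).
  - intros x [H|H]; [exists true|exists false]; auto.
  - apply small_union; [|intros [|]; auto].
    intros [f finj]; apply G_uncountable; exists (fun x => if f x then 0 else 1).
    intros a b E; apply finj; destruct (f a), (f b); simpl in E; congruence.
Qed.

End Smallness.

Section Group.
Variables (G : Type) (mul : G -> G -> G) (e : G) (inv : G -> G).
Hypothesis G_group : is_group mul e inv.

Lemma mulA x y z : mul x (mul y z) = mul (mul x y) z. Proof. apply G_group. Qed.
Lemma mul1g x : mul e x = x. Proof. apply G_group. Qed.
Lemma mulg1 x : mul x e = x. Proof. apply G_group. Qed.
Lemma mulVg x : mul (inv x) x = e. Proof. apply G_group. Qed.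
Lemma mulgV x : mul x (inv x) = e. Proof. apply G_group. Qed.

Lemma mulKg a b : mul (inv a) (mul a b) = b.
Proof. rewrite mulA, mulVg, mul1g; auto. Qed.
Lemma mulKVg a b : mul a (mul (inv a) b) = b.
Proof. rewrite mulA, mulgV, mul1g; auto. Qed.
Lemma invg_unique x y : mul x y = e -> y = inv x.
Proof. intro H. rewrite <- (mulKg x y), H, mulg1; auto. Qed.
Lemma invgK a : inv (inv a) = a.
Proof. symmetry; apply invg_unique, mulVg. Qed.
Lemma invg1 : inv e = e.
Proof. symmetry; apply invg_unique, mul1g. Qed.
Lemma invMg a b : inv (mul a b) = mul (inv b) (inv a).
Proof. symmetry; apply invg_unique. rewrite mulA, <- (mulA a b), mulgV, mulg1, mulgV; auto. Qed.

Inductive word (P : G -> Prop) : nat -> G -> Prop :=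
| word_nil : word P 0 e
| word_snoc n w s : word P n w -> P s \/ P (inv s) -> word P (S n) (mul w s).

Definition gen (P : G -> Prop) (g : G) : Prop := exists n, word P n g.

Lemma gen_e P : gen P e. Proof. exists 0; constructor. Qed.

Lemma gen_of (P : G -> Prop) s : P s \/ P (inv s) -> gen P s.
Proof. intro H. exists 1. rewrite <- (mul1g s). constructor; [constructor | exact H]. Qed.

Lemma gen_mul P a b : gen P a -> gen P b -> gen P (mul a b).
Proof.
  intros Ha [m Hb]. revert a Ha. induction Hb as [|n w s Hw IH Hs]; intros a Ha.
  - rewrite mulg1; auto.
  - rewrite mulA. destruct (IH a Ha) as [k Hk]. exists (S k). constructor; auto.
Qed.

Lemma gen_inv P a : gen P a -> gen P (inv a).
Proof.
  intros [n H]. induction H as [|n w s Hw IH Hs].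
  - rewrite invg1; apply gen_e.
  - rewrite invMg. apply gen_mul; auto. apply gen_of. rewrite invgK. tauto.
Qed.

Lemma gen_mono (P Q : G -> Prop) : (forall x, P x -> Q x) -> forall g, gen P g -> gen Q g.
Proof.
  intros PQ g [n H]; exists n. induction H as [|n w s Hw IH Hs]; constructor; firstorder.
Qed.

Hypothesis G_uncountable : uncountable G.
Hypothesis G_regular : regular_card G.
Local Notation small := (@smaller_than_carrier G).

Lemma small_word P : small P -> forall n, small (word P n).
Proof.
  intros HP n. induction n as [|n IH].
  - apply small_subset with (fun x => x = e); [|apply small_singleton; auto].
    intros x H; inversion H; auto.
  - apply small_subset with (fun g => exists w : {w | word P n w},
        exists s, (P s \/ P (inv s)) /\ g = mul (proj1_sig w) s).
    + intros g H. inversion H as [|n' w s Hw Hs]; subst. exists (exist _ w Hw). eauto.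
    + apply small_union; auto; [apply type_smaller_sig; auto|].
      intros [w Hw]. apply small_image, small_union2; auto.
      apply small_subset with (fun y => exists x, P x /\ y = inv x).
      * intros y Hy. exists (inv y); rewrite invgK; auto.
      * apply small_image; auto.
Qed.

Lemma small_gen P : small P -> small (gen P).
Proof. intros HP. apply small_union; auto. apply small_word, HP. Qed.

Section Decomposition.
Variable lt : G -> G -> Prop.
Hypothesis lt_wo : strict_well_order lt.
Hypothesis segments_small : forall x, small (fun y => lt y x).
Local Notation le := (@le G lt).

Definition Gle x := gen (fun y => le y x).
Definition Glt x := gen (fun y => lt y x).

Lemma Glt_small x : small (Glt x).
Proof. apply small_gen, segments_small. Qed.

Lemma Glt_e x : Glt x e. Proof. apply gen_e. Qed.
Lemma Gle_self x : Gle x x. Proof. apply gen_of; left; apply le_refl. Qed.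

Lemma Glt_Gle x g : Glt x g -> Gle x g.
Proof. apply gen_mono. intros y H; left; auto. Qed.
Lemma Gle_Glt {y x g} : lt y x -> Gle y g -> Glt x g.
Proof. intro H. apply gen_mono. intros z Hz. apply (le_lt_trans lt_wo Hz H). Qed.
Lemma Gle_mono {y x g} : le y x -> Gle y g -> Gle x g.
Proof. intro H. apply gen_mono. intros z Hz. apply (le_trans lt_wo Hz H). Qed.
Lemma Glt_mono {y x g} : le y x -> Glt y g -> Glt x g.
Proof. intro H. apply gen_mono. intros z Hz. apply (lt_le_trans lt_wo Hz H). Qed.

Lemma Glt_cases {x g} : Glt x g -> g = e \/ exists y, lt y x /\ Gle y g.
Proof.
  intros [n H]. induction H as [|n w s Hw IH Hs]; auto.
  assert (Hs' : exists y, lt y x /\ Gle y s).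
  { destruct Hs as [Hs|Hs]; [exists s | exists (inv s)]; split; auto; apply gen_of.
    - left; apply le_refl.
    - right; apply le_refl. }
  right. destruct Hs' as [y2 [Hy2 Gs]]. destruct IH as [->|[y1 [Hy1 Gw]]].
  - exists y2; rewrite mul1g; auto.
  - destruct (le_total lt_wo y1 y2) as [H12|H21].
    + exists y2; split; auto. apply gen_mul; auto. eapply Gle_mono; eauto.
    + exists y1; split; auto. apply gen_mul; auto. eapply Gle_mono; eauto.
Qed.

Lemma Glt_trivial_at_min : exists m, forall g, Glt m g -> g = e.
Proof.
  destruct (exists_min lt_wo (ex_intro (fun _ => True) e I)) as [m [_ Hm]].
  exists m. intros g H. destruct (Glt_cases H) as [|[y [Hy _]]]; auto.
  exfalso. apply (lt_not_le lt_wo Hy). apply Hm; auto.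
Qed.

Definition height_spec (g : G) : {m | Gle m g /\ forall y, Gle y g -> le m y} :=
  constructive_indefinite_description _
    (exists_min lt_wo (ex_intro (fun x => Gle x g) g (Gle_self g))).
Definition height g := proj1_sig (height_spec g).

Lemma Gle_height g : Gle (height g) g. Proof. apply (proj2_sig (height_spec g)). Qed.
Lemma height_min {x g} : Gle x g -> le (height g) x. Proof. apply (proj2_sig (height_spec g)). Qed.

Lemma height_lt {x g} : Glt x g -> g = e \/ lt (height g) x.
Proof.
  intro H. destruct (Glt_cases H) as [|[y [Hy Gy]]]; auto.
  right. apply (le_lt_trans lt_wo (height_min Gy) Hy).
Qed.

Lemma Glt_height_e g : Glt (height g) g -> g = e.
Proof.
  intro H. destruct (height_lt H) as [|Hl]; auto. exfalso; apply (lt_irrefl lt_wo _ Hl).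
Qed.

Lemma height_ge {x g} : ~ Glt x g -> le x (height g).
Proof. intro H. apply (not_lt_le lt_wo). intro Hl. apply H, (Gle_Glt Hl), Gle_height. Qed.

(* By regularity, fewer than |G| heights of elements of A are bounded in G. *)
Lemma small_sub_Glt {A : G -> Prop} : small A -> exists x, forall a, A a -> Glt x a.
Proof.
  intros HA. apply NNPP; intro Hno. apply (@not_small_full G).
  apply small_subset with (fun y => exists a : {a | A a}, le y (height (proj1_sig a))).
  - intros y _. apply NNPP; intro Hy. apply Hno. exists y. intros a Aa. apply NNPP; intro Ha.
    apply Hy. exists (exist _ a Aa). apply height_ge, Ha.
  - apply small_union; auto; [apply type_smaller_sig; auto|]. intros a.
    apply small_union2; auto using small_singleton.
Qed.

Lemma exists_gt x : exists y, lt x y.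
Proof.
  apply NNPP; intro H. apply (@not_small_full G).
  apply small_subset with (fun y => lt y x \/ y = x).
  - intros y _. apply (not_lt_le lt_wo). intro Hl. apply H; eauto.
  - apply small_union2; auto using small_singleton.
Qed.

Definition same_coset x g h := Glt x (mul (inv g) h).

Lemma same_coset_refl x g : same_coset x g g.
Proof. unfold same_coset. rewrite mulVg. apply Glt_e. Qed.

Lemma same_coset_sym {x g h} : same_coset x g h -> same_coset x h g.
Proof. unfold same_coset. intro H. apply gen_inv in H. rewrite invMg, invgK in H. exact H. Qed.

Lemma same_coset_trans {x g h k} : same_coset x g h -> same_coset x h k -> same_coset x g k.
Proof.
  unfold same_coset. intros Hgh Hhk. rewrite <- (mulKVg h k), mulA. apply gen_mul; auto.
Qed.

Lemma Glt_same_coset x g : Glt x g <-> same_coset x e g.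
Proof. unfold same_coset. rewrite invg1, mul1g. tauto. Qed.

(* The chosen predicate depends only on the coset of g, so equal cosets get
   equal representatives. *)
Definition coset_rep x g :=
  epsilon (inhabits e) (fun r => same_coset x g r /\ (Glt x g -> r = e)).

Lemma coset_rep_spec x g : same_coset x g (coset_rep x g) /\ (Glt x g -> coset_rep x g = e).
Proof.
  unfold coset_rep. apply epsilon_spec. destruct (classic (Glt x g)) as [H|H].
  - exists e. split; auto. apply same_coset_sym, (proj1 (Glt_same_coset x g) H).
  - exists g. split; [apply same_coset_refl | tauto].
Qed.

Lemma coset_rep_e x g : Glt x g -> coset_rep x g = e.
Proof. apply coset_rep_spec. Qed.

Lemma coset_rep_eq x g h : same_coset x g h -> coset_rep x g = coset_rep x h.
Proof.
  intro Hgh. unfold coset_rep. f_equal. apply functional_extensionality; intro r.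
  apply propositional_extensionality. rewrite !Glt_same_coset.
  split; intros [Hr He]; split.
  - eapply same_coset_trans; eauto using same_coset_sym.
  - intros Hh. apply He. eapply same_coset_trans; eauto using same_coset_sym.
  - eapply same_coset_trans; eauto.
  - intros Hg. apply He. eapply same_coset_trans; eauto.
Qed.

Lemma coset_rep_neq x g : ~ Glt x g -> coset_rep x g <> e.
Proof.
  intros H E. apply H, Glt_same_coset, same_coset_sym. rewrite <- E. apply coset_rep_spec.
Qed.

Lemma coset_rep_idem x g : coset_rep x (coset_rep x g) = coset_rep x g.
Proof. symmetry. apply coset_rep_eq, coset_rep_spec. Qed.

Lemma Gle_coset_rep x g : Gle x g -> Gle x (coset_rep x g).
Proof.
  intro H. rewrite <- (mulKVg g (coset_rep x g)).
  apply gen_mul; auto. apply Glt_Gle, coset_rep_spec.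
Qed.

Definition strip g := mul (inv (coset_rep (height g) g)) g.

Lemma Glt_strip g : Glt (height g) (strip g).
Proof. apply same_coset_sym, coset_rep_spec. Qed.

Lemma strip_quotient g h : coset_rep (height g) g = coset_rep (height h) h ->
  mul (inv (strip g)) (strip h) = mul (inv g) h.
Proof.
  intros Er. unfold strip. rewrite <- Er, invMg, invgK, <- mulA, mulKVg. auto.
Qed.

Definition strip_order a b := b <> e /\ (a = e \/ lt (height a) (height b)).

Lemma strip_order_wf : well_founded strip_order.
Proof.
  assert (Acc_e : Acc strip_order e). { constructor. intros y [H _]. contradiction. }
  assert (H : forall x, Acc lt x -> forall b, height b = x -> Acc strip_order b).
  { intros x Hx. induction Hx as [x _ IH]. intros b Eb. constructor.
    intros a [_ [->|Hl]]; auto. apply (IH (height a)); auto. rewrite <- Eb; auto. }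
  intro b. apply (H (height b)); auto. apply (lt_wf lt_wo).
Qed.

Lemma strip_order_strip {g} : g <> e -> strip_order (strip g) g.
Proof. intro H. split; auto. apply height_lt, Glt_strip. Qed.

Definition coord_step (g : G) (rec : forall g', strip_order g' g -> G -> G) : G -> G :=
  match excluded_middle_informative (g = e) with
  | left _ => fun _ => e
  | right ne => fun x =>
      if excluded_middle_informative (x = height g) then coset_rep (height g) g
      else rec (strip g) (strip_order_strip ne) x
  end.

Definition coord : G -> G -> G := Fix strip_order_wf (fun _ => G -> G) coord_step.

Lemma coord_unfold g : coord g = coord_step g (fun g' _ => coord g').
Proof.
  apply (Fix_eq strip_order_wf (fun _ => G -> G) coord_step). intros x f1 f2 Hf.
  unfold coord_step. destruct (excluded_middle_informative (x = e)); auto.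
  apply functional_extensionality; intro y.
  destruct (excluded_middle_informative (y = height x)); auto.
  rewrite Hf; auto.
Qed.

Lemma coord_e x : coord e x = e.
Proof.
  rewrite coord_unfold. unfold coord_step.
  destruct (excluded_middle_informative (e = e)); congruence.
Qed.

Lemma coord_height g : coord g (height g) = coset_rep (height g) g.
Proof.
  rewrite coord_unfold. unfold coord_step.
  destruct (excluded_middle_informative (g = e)) as [->|].
  - symmetry; apply coset_rep_e, Glt_e.
  - destruct (excluded_middle_informative (height g = height g)); congruence.
Qed.

Lemma coord_strip {g x} : g <> e -> x <> height g -> coord g x = coord (strip g) x.
Proof.
  intros ng nx. rewrite coord_unfold. unfold coord_step.
  destruct (excluded_middle_informative (g = e)); [contradiction|].
  destruct (excluded_middle_informative (x = height g)); [contradiction | auto].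
Qed.

Lemma coord_above g x : lt (height g) x -> coord g x = e.
Proof.
  revert x. induction g as [g IH] using (well_founded_ind strip_order_wf). intros x Hx.
  destruct (classic (g = e)) as [->|ng]; [apply coord_e|].
  rewrite coord_strip; auto.
  - destruct (strip_order_strip ng) as [_ [E|Hl]].
    + rewrite E; apply coord_e.
    + apply IH; [apply strip_order_strip; auto | apply (lt_trans lt_wo Hl Hx)].
  - intros ->. apply (lt_irrefl lt_wo _ Hx).
Qed.

Lemma coord_finite g : exists s, forall x, coord g x <> e -> In x s.
Proof.
  induction g as [g IH] using (well_founded_ind strip_order_wf).
  destruct (classic (g = e)) as [->|ng].
  - exists nil. intros x H; apply H, coord_e.
  - destruct (IH (strip g) (strip_order_strip ng)) as [s Hs]. exists (height g :: s).
    intros x Hx. destruct (classic (x = height g)) as [->|nx]; [left; auto|].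
    right; apply Hs. rewrite <- coord_strip; auto.
Qed.

Definition is_coset_rep x r := Gle x r /\ coset_rep x r = r.

Lemma is_coset_rep_e x : is_coset_rep x e.
Proof. split; [apply gen_e | apply coset_rep_e, Glt_e]. Qed.

Lemma is_coset_rep_coord g x : is_coset_rep x (coord g x).
Proof.
  revert x. induction g as [g IH] using (well_founded_ind strip_order_wf). intros x.
  destruct (classic (g = e)) as [->|ng]; [rewrite coord_e; apply is_coset_rep_e|].
  destruct (classic (x = height g)) as [->|nx].
  - rewrite coord_height. split; [apply Gle_coset_rep, Gle_height | apply coset_rep_idem].
  - rewrite coord_strip; auto. apply IH, strip_order_strip; auto.
Qed.

Lemma Glt_iff_coord_vanish x g : Glt x g <-> forall y, le x y -> coord g y = e.
Proof.
  split.
  - intros H y Hy. destruct (height_lt H) as [->|Hl]; [apply coord_e|].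
    apply coord_above, (lt_le_trans lt_wo Hl Hy).
  - intros H. apply NNPP; intro Hn.
    assert (ng : g <> e) by (intros ->; apply Hn, Glt_e).
    apply (coset_rep_neq (height g) g).
    + intro H'; apply ng, Glt_height_e, H'.
    + rewrite <- coord_height. apply H, height_ge, Hn.
Qed.

Lemma coord_height_neq g : g <> e -> coord g (height g) <> e.
Proof.
  intros ng. rewrite coord_height. apply coset_rep_neq. intro H; apply ng, Glt_height_e, H.
Qed.

Lemma coord_neq_le_height g y : coord g y <> e -> le y (height g).
Proof. intros H. apply (not_lt_le lt_wo). intro Hl. apply H, coord_above, Hl. Qed.

Lemma coord_strip_height g : coord (strip g) (height g) = e.
Proof. apply (Glt_iff_coord_vanish (height g) (strip g)); [apply Glt_strip | apply le_refl]. Qed.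

Lemma same_coset_Glt {x g h} : same_coset x g h -> Glt x g -> Glt x h.
Proof.
  intros Hgh Hg. apply (Glt_same_coset x h).
  apply (same_coset_trans (proj1 (Glt_same_coset x g) Hg) Hgh).
Qed.

Lemma height_le_same_coset {x g h} : same_coset x g h -> ~ Glt x g -> le (height h) (height g).
Proof.
  intros Hgh Hg. apply height_min. rewrite <- (mulKVg g h).
  apply gen_mul; [apply Gle_height | apply Glt_Gle, (Glt_mono (height_ge Hg)), Hgh].
Qed.

Lemma same_coset_height {x g h} : same_coset x g h -> ~ Glt x g -> height g = height h.
Proof.
  intros Hgh Hg.
  assert (Hh : ~ Glt x h) by (intro H; apply Hg, (same_coset_Glt (same_coset_sym Hgh)), H).
  apply (le_antisym lt_wo); [apply (height_le_same_coset (same_coset_sym Hgh)) |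
                             apply (height_le_same_coset Hgh)]; auto.
Qed.

Definition coords_agree_from x g h := forall y, le x y -> coord g y = coord h y.

Lemma same_coset_coords_agree x g h : same_coset x g h -> coords_agree_from x g h.
Proof.
  revert h. induction g as [g IH] using (well_founded_ind strip_order_wf). intros h Hgh.
  destruct (classic (Glt x g)) as [Hg|Hg].
  - intros y Hy.
    rewrite (proj1 (Glt_iff_coord_vanish x g) Hg y Hy).
    rewrite (proj1 (Glt_iff_coord_vanish x h) (same_coset_Glt Hgh Hg) y Hy). auto.
  - assert (ng : g <> e) by (intros ->; apply Hg, Glt_e).
    assert (nh : h <> e) by (intros ->; apply Hg, (same_coset_Glt (same_coset_sym Hgh)), Glt_e).
    assert (Eht := same_coset_height Hgh Hg).
    assert (Er : coset_rep (height g) g = coset_rep (height h) h).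
    { rewrite <- Eht. apply coset_rep_eq, (Glt_mono (height_ge Hg)), Hgh. }
    assert (Hs : coords_agree_from x (strip g) (strip h)).
    { apply IH; [apply strip_order_strip; auto|].
      unfold same_coset. rewrite strip_quotient; auto. }
    intros y Hy. destruct (classic (y = height g)) as [->|ny].
    + rewrite coord_height, Er, Eht. symmetry; apply coord_height.
    + rewrite (coord_strip ng ny), (coord_strip nh); [apply Hs; auto | rewrite <- Eht; auto].
Qed.

Lemma coords_agree_same_coset x g h : coords_agree_from x g h -> same_coset x g h.
Proof.
  revert h. induction g as [g IH] using (well_founded_ind strip_order_wf). intros h Hgh.
  assert (vanish_transfer : Glt x g <-> Glt x h).
  { rewrite !Glt_iff_coord_vanish. split; intros H y Hy; [rewrite <- Hgh | rewrite Hgh]; auto. }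
  destruct (classic (Glt x g)) as [Hg|Hg].
  - apply (same_coset_trans (same_coset_sym (proj1 (Glt_same_coset x g) Hg))).
    apply (proj1 (Glt_same_coset x h)), vanish_transfer, Hg.
  - assert (Hh : ~ Glt x h) by (rewrite <- vanish_transfer; auto).
    assert (ng : g <> e) by (intros ->; apply Hg, Glt_e).
    assert (nh : h <> e) by (intros ->; apply Hh, Glt_e).
    assert (Eht : height g = height h).
    { apply (le_antisym lt_wo); apply coord_neq_le_height.
      - rewrite <- Hgh; [apply coord_height_neq | apply height_ge]; auto.
      - rewrite Hgh; [apply coord_height_neq | apply height_ge]; auto. }
    assert (Er : coset_rep (height g) g = coset_rep (height h) h).
    { rewrite <- !coord_height, <- Eht. apply Hgh, height_ge, Hg. }
    assert (Hs : coords_agree_from x (strip g) (strip h)).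
    { intros y Hy. destruct (classic (y = height g)) as [->|ny].
      - rewrite coord_strip_height, Eht, coord_strip_height; auto.
      - rewrite <- (coord_strip ng ny), <- (coord_strip nh); [apply Hgh; auto | rewrite <- Eht; auto]. }
    unfold same_coset. rewrite <- strip_quotient; auto.
    apply IH; auto. apply strip_order_strip; auto.
Qed.

Lemma coord_inj g h : (forall x, coord g x = coord h x) -> g = h.
Proof.
  intros H. destruct Glt_trivial_at_min as [m Hm].
  assert (E : mul (inv g) h = e) by (apply Hm, coords_agree_same_coset; intros y _; auto).
  rewrite <- (mulKVg g h), E, mulg1. auto.
Qed.

Lemma coord_mul_top {m r g} : is_coset_rep m r -> r <> e -> Glt m g ->
  coord (mul r g) m = r /\ forall x, x <> m -> coord (mul r g) x = coord g x.
Proof.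
  intros [Gr Rr] nr Hg.
  assert (Rrg : coset_rep m (mul r g) = r).
  { rewrite <- Rr at 2. apply coset_rep_eq. unfold same_coset.
    rewrite invMg, <- mulA, mulVg, mulg1. apply gen_inv, Hg. }
  assert (Hn : ~ Glt m (mul r g)) by (intro H; apply nr; rewrite <- Rrg; apply coset_rep_e, H).
  assert (nrg : mul r g <> e) by (intros E; apply Hn; rewrite E; apply Glt_e).
  assert (Eh : height (mul r g) = m).
  { apply (le_antisym lt_wo); [apply height_min | apply height_ge, Hn].
    apply gen_mul; [exact Gr | apply Glt_Gle, Hg]. }
  assert (Es : strip (mul r g) = g) by (unfold strip; rewrite Eh, Rrg; apply mulKg).
  split.
  - rewrite <- Eh, coord_height, Eh. exact Rrg.
  - intros x nx. rewrite (coord_strip nrg), Es; auto. rewrite Eh; auto.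
Qed.

(* Induction on a strict bound for the support: the largest coordinate of F
   becomes the top coordinate of the element built from the others. *)
Lemma coord_surj_below a : forall F : G -> G, (forall x, is_coset_rep x (F x)) ->
  (exists s, forall x, F x <> e -> In x s) -> (forall x, F x <> e -> lt x a) ->
  exists g, forall x, coord g x = F x.
Proof.
  induction a as [a IH] using (well_founded_ind (lt_wf lt_wo)).
  intros F HF [s Hs] Ha.
  destruct (classic (exists x, F x <> e)) as [Hex|Hno].
  2:{ exists e. intros x. rewrite coord_e. apply NNPP; intro H; apply Hno; eauto. }
  destruct (exists_max_of_finite lt_wo s Hs Hex) as [m [Fm Hmax]].
  set (F' := fun x => if excluded_middle_informative (x = m) then e else F x).
  destruct (IH m (Ha m Fm) F') as [g' Hg'].
  - intros x. unfold F'. destruct (excluded_middle_informative (x = m)); auto using is_coset_rep_e.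
  - exists s. intros x. unfold F'. destruct (excluded_middle_informative (x = m)); [tauto | apply Hs].
  - intros x. unfold F'. destruct (excluded_middle_informative (x = m)) as [|nx]; [tauto|].
    intro H. destruct (Hmax x H); [auto | contradiction].
  - assert (Glt_g' : Glt m g').
    { apply Glt_iff_coord_vanish. intros y Hy. rewrite Hg'. unfold F'.
      destruct (excluded_middle_informative (y = m)) as [|ny]; auto.
      destruct Hy as [Hy|]; [|congruence]. apply NNPP; intro Fy.
      apply (lt_not_le lt_wo Hy (Hmax y Fy)). }
    destruct (coord_mul_top (HF m) Fm Glt_g') as [Htop Hrest].
    exists (mul (F m) g'). intros x. destruct (classic (x = m)) as [->|nx]; auto.
    rewrite Hrest, Hg'; auto. unfold F'.
    destruct (excluded_middle_informative (x = m)); [contradiction | auto].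
Qed.

Lemma exists_strict_upper_bound (s : list G) : exists a, forall x, In x s -> lt x a.
Proof.
  destruct s as [|b s]; [exists e; intros x []|].
  destruct (list_has_max lt_wo (b :: s)) as [m [_ Hm]]; [discriminate|].
  destruct (exists_gt m) as [a Ha]. exists a. intros x Hx. apply (le_lt_trans lt_wo (Hm x Hx) Ha).
Qed.

Lemma coord_surj F : (forall x, is_coset_rep x (F x)) ->
  (exists s, forall x, F x <> e -> In x s) -> exists g, forall x, coord g x = F x.
Proof.
  intros HF [s Hs]. destruct (exists_strict_upper_bound s) as [a Ha].
  apply (coord_surj_below a); eauto.
Qed.

Definition coset_reps x := {r | is_coset_rep x r}.
Definition coset_reps_e x : coset_reps x := exist _ e (is_coset_rep_e x).

Lemma coords_finite g : exists s, forall x,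
  exist (is_coset_rep x) (coord g x) (is_coset_rep_coord g x) <> coset_reps_e x -> In x s.
Proof.
  destruct (coord_finite g) as [s Hs]. exists s. intros x H. apply Hs. intro E. apply H.
  apply proj1_sig_inj, E.
Qed.

Definition coords g : dprod coset_reps coset_reps_e :=
  exist _ (fun x => exist _ (coord g x) (is_coset_rep_coord g x)) (coords_finite g).

Lemma coords_inj : injective coords.
Proof.
  intros g h E. apply coord_inj. intros x.
  exact (f_equal (fun f : dprod coset_reps coset_reps_e => proj1_sig (proj1_sig f x)) E).
Qed.

Lemma coords_surj f : exists g, coords g = f.
Proof.
  destruct (coord_surj (fun x => proj1_sig (proj1_sig f x))) as [g Hg].
  - intros x; apply (proj2_sig (proj1_sig f x)).
  - destruct (proj2_sig f) as [s Hs]. exists s. intros x Hx. apply Hs. intro E.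
    apply Hx. rewrite E. reflexivity.
  - exists g. apply proj1_sig_inj, functional_extensionality_dep. intro x.
    apply proj1_sig_inj, Hg.
Qed.

Lemma dprod_ball_coords x g h :
  dprod_ball lt (coords g) x (coords h) <-> coords_agree_from x g h.
Proof.
  split; intros H y Hy.
  - symmetry. exact (f_equal (@proj1_sig _ _) (H y Hy)).
  - apply proj1_sig_inj. symmetry; apply H, Hy.
Qed.

(* The ball gA is contained in the coset g Glt x for x bounding A, and
   the ball of radius x around coords g is exactly coords (g Glt x). *)
Lemma group_ball_asymorphic_coords :
  asymorphic (group_ball mul (e:=e)) (dprod_ball lt (Z:=coset_reps) (ez:=coset_reps_e)).
Proof.
  destruct (injective_surjective_inverse coords_inj coords_surj) as [psi [psiK coordsK]].
  exists coords, psi. split; [|split; [|split]]; auto.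
  - intros A. destruct (small_sub_Glt (proj2 (proj2_sig A))) as [x Hx]. exists x.
    intros g y [a [Aa ->]]. apply dprod_ball_coords, same_coset_coords_agree.
    unfold same_coset. rewrite mulKg. auto.
  - intros x. exists (exist _ (Glt x) (conj (Glt_e x) (Glt_small x))).
    intros f f' Hff'. exists (mul (inv (psi f)) (psi f')). split.
    + apply coords_agree_same_coset, dprod_ball_coords. rewrite !coordsK. exact Hff'.
    + rewrite mulKVg. auto.
Qed.

End Decomposition.
End Group.

Theorem corollary2 (G : Type) (mul : G -> G -> G) (e : G) (inv : G -> G) :
  is_group mul e inv ->
  uncountable G ->
  regular_card G ->
  exists (I : Type) (lt : I -> I -> Prop) (Z : I -> Type) (ez : forall i, Z i),
    strict_well_order lt /\
    asymorphic (group_ball mul (e:=e)) (dprod_ball lt (Z:=Z) (ez:=ez)).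
Proof.
  intros G_group G_uncountable G_regular.
  destruct (@well_order_with_small_segments G) as [lt [lt_wo segments_small]].
  exists G, lt. do 2 eexists. split; [exact lt_wo|].
  exact (group_ball_asymorphic_coords _ _ _ _ G_group G_uncountable G_regular lt lt_wo
           segments_small).
Qed.
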